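(* Let $H_1,H_2$ be graphs whose cores are both isomorphic to a graph $C$, and suppose there is a homomorphism from $H_1$ to $H_2$. Then the $C$-covering number of $H_1$ is at most the $C$-covering number of $H_2$.
   Context: A homomorphism $F\to F'$ is a vertex map sending edges to edges. A subgraph $C$ of $H$ is a core of $H$ if there is a homomorphism $H\to C$ but none from $H$ to a proper subgraph of $C$. A copy of $C$ in $F$ is a (not necessarily induced) subgraph of $F$ isomorphic to $C$. For a graph $F$ and a $c$-vertex graph $C$, a $C$-coloring of $F$ is a map $f:V(F)\to\{1,\dots,c\}$ such that the vertices of every copy of $C$ in $F$ receive pairwise distinct colors; $F$ is $C$-colorable if it has one. If $C$ is the core of $H$, a $C$-covering of $H$ of size $r$ is a collection $C_1,\dots,C_r\subseteq V(H)$ such that every copy of $C$ in $H$ lies in the subgraph induced by some $C_i$, and each induced subgraph $H[C_i]$ is $C$-colorable. The $C$-covering number of $H$ is the minimum size of a $C$-covering of $H$. *)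

From Stdlib Require Import ClassicalEpsilon.
From mathcomp Require Import all_boot.
Set Implicit Arguments. Unset Strict Implicit. Unset Printing Implicit Defensive.

Record sgraph := SGraph {
  svert :> finType;
  sadj : rel svert;
  sadj_sym : symmetric sadj;
  sadj_irr : irreflexive sadj }.

Definition is_hom (F F' : sgraph) (f : F -> F') : Prop :=
  forall x y, sadj x y -> sadj (f x) (f y).

Definition is_subgraph (H : sgraph) (S : {set H}) (E : rel H) : Prop :=
  (forall x y, E x y -> [&& sadj x y, x \in S & y \in S]) /\
  (forall x y, E x y -> E y x).

Definition hom_into (F H : sgraph) (S : {set H}) (E : rel H) (f : F -> H) : Prop :=
  (forall x, f x \in S) /\ (forall x y, sadj x y -> E (f x) (f y)).

Definition is_core (H : sgraph) (S : {set H}) (E : rel H) : Prop :=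
  is_subgraph S E /\
  (exists f : H -> H, hom_into S E f) /\
  ~ (exists (S' : {set H}) (E' : rel H),
        is_subgraph S' E' /\ S' \subset S /\ (forall x y, E' x y -> E x y) /\
        ~ (S' = S /\ (forall x y, E' x y = E x y)) /\
        exists f : H -> H, hom_into S' E' f).

Definition iso_to_sub (C H : sgraph) (S : {set H}) (E : rel H) : Prop :=
  exists g : C -> H, injective g /\ (forall y, y \in S <-> exists u, g u = y) /\
                     (forall u v, sadj u v = E (g u) (g v)).

Definition core_isomorphic (H C : sgraph) : Prop :=
  exists (S : {set H}) (E : rel H), is_core S E /\ iso_to_sub C S E.

(* A copy of C in F, given as an injective edge-preserving map (its image with
   the image edges is a, not necessarily induced, subgraph isomorphic to C). *)
Definition is_copy (C F : sgraph) (phi : C -> F) : Prop :=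
  injective phi /\ is_hom phi.

Definition is_C_coloring (C F : sgraph) (f : F -> 'I_#|C|) : Prop :=
  forall phi : C -> F, is_copy phi -> injective (f \o phi).

Definition C_colorable (C F : sgraph) : Prop :=
  exists f : F -> 'I_#|C|, is_C_coloring f.

Section Induced.
Variables (H : sgraph) (S : {set H}).
Definition ind_vert := {x : H | x \in S}.
Definition ind_adj : rel ind_vert := fun x y => sadj (val x) (val y).
Lemma ind_adj_sym : symmetric ind_adj.
Proof. by move=> x y; rewrite /ind_adj sadj_sym. Qed.
Lemma ind_adj_irr : irreflexive ind_adj.
Proof. by move=> x; rewrite /ind_adj sadj_irr. Qed.
Definition induced : sgraph := SGraph ind_adj_sym ind_adj_irr.
End Induced.

Definition is_C_covering (C H : sgraph) (cs : seq {set H}) : Prop :=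
  (forall phi : C -> H, is_copy phi ->
     exists2 S, S \in cs & forall u, phi u \in S) /\
  (forall S, S \in cs -> C_colorable C (induced S)).

Definition has_C_covering_of_size (C H : sgraph) (r : nat) : Prop :=
  exists cs : seq {set H}, size cs = r /\ is_C_covering C cs.

Definition has_cov_b (C H : sgraph) (r : nat) : bool :=
  if excluded_middle_informative (has_C_covering_of_size C H r) then true else false.

(* Existence of some C-covering (one set per injective map C -> H). *)
Lemma C_covering_exists (C H : sgraph) : exists r, has_cov_b C H r.
Proof.
pose cs := [seq [set x in codom phi] | phi : {ffun C -> H} <- enum {ffun C -> H} & injectiveb phi].
exists (size cs); rewrite /has_cov_b.
case: excluded_middle_informative => // nH; exfalso; apply: nH.
exists cs; split=> //; split.
  move=> phi [inj_phi _]; exists [set x in codom (finfun phi)].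
    apply/mapP; exists (finfun phi) => //; rewrite mem_filter mem_enum andbT.
    by apply/injectiveP => u v; rewrite !ffunE => /inj_phi.
  by move=> u; rewrite inE; apply/codomP; exists u; rewrite ffunE.
move=> S /mapP [phi]; rewrite mem_filter mem_enum andbT => /injectiveP inj_phi ->.
have memS (x : induced [set x in codom phi]) : val x \in codom phi.
  by have := valP x; rewrite inE.
exists (fun x => enum_rank (iinv (memS x))) => psi [inj_psi _] u v /=.
move/enum_rank_inj => e; apply: inj_psi; apply: val_inj.
by rewrite -(f_iinv (memS (psi u))) e f_iinv.
Qed.

Definition covering_number (C H : sgraph) : nat := ex_minn (C_covering_exists C H).

(* A homomorphism C -> H into a graph whose core is isomorphic to C must be
   injective: otherwise composing it with a retraction onto the core would give
   a homomorphism of H onto a subgraph of the core with fewer than #|C|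
   vertices.  Hence a homomorphism f : H1 -> H2 sends copies of C to copies of
   C, and the preimages under f of the sets of a C-covering of H2 form a
   C-covering of H1 of the same size, colorings being pulled back along f. *)
From Stdlib Require Import ClassicalEpsilon.
From mathcomp Require Import all_boot.
Set Implicit Arguments. Unset Strict Implicit. Unset Printing Implicit Defensive.

Lemma hom_comp (F G H : sgraph) (f : F -> G) (g : G -> H) :
  is_hom f -> is_hom g -> is_hom (g \o f).
Proof. by move=> hf hg x y /hf /hg. Qed.

Lemma iso_to_sub_card (C H : sgraph) (S : {set H}) (E : rel H) :
  iso_to_sub C S E -> #|S| = #|C|.
Proof.
case=> g [g_inj [gS _]].
have -> : S = g @: [set: C].
  apply/setP=> x; apply/idP/imsetP => [/gS [u <-]|[u _ ->]]; first by exists u.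
  by apply/gS; exists u.
by rewrite card_imset // cardsT.
Qed.

Section CoreHom.
Variables (H C : sgraph).
Hypothesis coreC : core_isomorphic H C.

Lemma core_hom_injective (psi : C -> H) : is_hom psi -> injective psi.
Proof.
case: coreC => S [E [[[subE symE] [[r [rS rE]] no_smaller]] isoC]] hom_psi u v psi_uv.
have [//|neq_uv] := eqVneq u v; exfalso; apply: no_smaller.
have [g [_ [gS gE]]] := isoC.
have back x : {w : C | g w = r x}.
  have /sigW [w /eqP gw] : exists w, g w == r x.
    by have /gS [w <-] := rS x; exists w.
  by exists w.
pose t := r \o psi.
pose S' := t @: [set: C].
pose E' x y := [&& E x y, x \in S' & y \in S'].
have r_hom a b : sadj a b -> E (t a) (t b) by move=> /hom_psi /rE.
exists S', E'; split; [|split; [|split; [|split]]].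
- split=> x y /and3P [Exy xS yS]; last by rewrite /E' symE // xS yS.
  by have /and3P [-> _ _] := subE _ _ Exy; rewrite xS yS.
- by apply/subsetP=> _ /imsetP [w _ ->]; apply: rS.
- by move=> x y /and3P [].
- move=> [S'S _].
  have : #|S'| == #|[set: C]| by rewrite S'S (iso_to_sub_card isoC) cardsT.
  move/imset_injP=> t_inj.
  by move/eqP: neq_uv; apply; apply: t_inj; rewrite ?inE // /t /= psi_uv.
- exists (fun x => t (sval (back x))); split=> [x|x y xy]; first exact: imset_f.
  rewrite /E' !imset_f // andbT r_hom // gE !(svalP (back _)).
  exact: rE.
Qed.

Lemma hom_copy_comp (F : sgraph) (f : F -> H) (phi : C -> F) :
  is_hom f -> is_copy phi -> is_copy (f \o phi).
Proof.
move=> hom_f [_ hom_phi]; have hom_fphi := hom_comp hom_phi hom_f.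
by split=> //; apply: core_hom_injective.
Qed.

End CoreHom.

Section Preimage.
Variables (C F H : sgraph) (f : F -> H).
Hypothesis copy_f : forall phi : C -> F, is_copy phi -> is_copy (f \o phi).

Lemma C_colorable_preimage (A : {set H}) :
  C_colorable C (induced A) -> C_colorable C (induced (f @^-1: A)).
Proof.
case=> c c_col.
have fA (x : induced (f @^-1: A)) : f (val x) \in A by have := valP x; rewrite inE.
pose lift (x : induced (f @^-1: A)) : induced A := exist _ (f (val x)) (fA x).
exists (c \o lift) => psi [psi_inj hom_psi].
have val_copy : is_copy (fun w => val (psi w) : F).
  by split=> [a b /val_inj /psi_inj|x y /hom_psi].
have [fpsi_inj hom_fpsi] := copy_f val_copy.
have lift_copy : is_copy (lift \o psi).
  by split=> [a b /(congr1 val) /fpsi_inj|x y /hom_fpsi].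
exact: c_col lift_copy.
Qed.

Lemma C_covering_preimage (cs : seq {set H}) :
  is_C_covering C cs -> is_C_covering C [seq f @^-1: (A : {set H}) | A <- cs].
Proof.
case=> cover col; split=> [phi copy_phi|_ /mapP [A A_cs ->]].
  have [A A_cs fphiA] := cover _ (copy_f copy_phi).
  by exists (f @^-1: A); [apply: map_f | move=> u; rewrite inE fphiA].
exact/C_colorable_preimage/col.
Qed.

End Preimage.

Lemma has_cov_bP (C H : sgraph) (r : nat) :
  reflect (has_C_covering_of_size C H r) (has_cov_b C H r).
Proof. by rewrite /has_cov_b; case: excluded_middle_informative; constructor. Qed.

Lemma covering_number_spec (C H : sgraph) :
  has_C_covering_of_size C H (covering_number C H).
Proof. by rewrite /covering_number; case: ex_minnP => n /has_cov_bP. Qed.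

Lemma covering_number_min (C H : sgraph) (r : nat) :
  has_C_covering_of_size C H r -> covering_number C H <= r.
Proof. by rewrite /covering_number => /has_cov_bP; case: ex_minnP => n _; apply. Qed.

Theorem lemma13 (H1 H2 C : sgraph) :
  core_isomorphic H1 C -> core_isomorphic H2 C ->
  (exists f : H1 -> H2, is_hom f) ->
  covering_number C H1 <= covering_number C H2.
Proof.
move=> _ core2 [f hom_f].
have [cs [size_cs cov]] := covering_number_spec C H2.
apply: covering_number_min.
exists [seq f @^-1: (A : {set H2}) | A <- cs]; rewrite size_map; split=> //.
apply: C_covering_preimage cov => phi; exact: hom_copy_comp.
Qed.
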